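(* In a strongly causal, digitalizable OPT, let $\Psi\in\mathsf{St}_1(\mathrm{A}\mathrm{B})$ and let $\rho=(\mathcal I_{\mathrm{A}}\boxtimes e_{\mathrm{B}})\Psi\in\mathsf{St}_1(\mathrm{A})$ and $\sigma=(e_{\mathrm{A}}\boxtimes\mathcal I_{\mathrm{B}})\Psi\in\mathsf{St}_1(\mathrm{B})$ be its marginals. Then $I(\Psi)\le I(\rho)+I(\sigma)$.
   Context: Framework (operational probabilistic theory, OPT): each system $\mathrm{A}$ has a set of states $\mathsf{St}(\mathrm{A})$ (normalized/deterministic ones $\mathsf{St}_1(\mathrm{A})$), effects $\mathsf{Eff}(\mathrm{A})$, and transformations $\mathsf{Tr}(\mathrm{A}\to\mathrm{B})$ (deterministic ones, i.e. channels, $\mathsf{Tr}_1(\mathrm{A}\to\mathrm{B})$); transformations compose sequentially ($\circ$) and in parallel ($\boxtimes$), $\mathrm{A}\mathrm{B}$ is the composite system, $\mathrm{I}$ the trivial system, and $(a|\rho)\in[0,1]$ the probability of effect $a$ on state $\rho$. A test is a collection of events summing to a channel. The theory is strongly causal: for every test $\{\mathcal A_i\}$ and family of tests $\{\mathcal B^i_j\}_j$ indexed by $i$, $\{\mathcal B^i_j\circ\mathcal A_i\}_{i,j}$ is a test; in particular every system has a unique deterministic effect $e_{\mathrm{A}}$. Operational norm: $\|\delta\|_{\rm op}:=\sup_{a\in\mathsf{Eff}(\mathrm{A})}((2a-e_{\mathrm{A}})|\delta)$ on the real span of states. A dilation of $\rho\in\mathsf{St}(\mathrm{A})$ is a state $\Psi\in\mathsf{St}(\mathrm{A}\mathrm{C})$,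 for some system $\mathrm{C}$, with $(\mathcal I_{\mathrm{A}}\boxtimes e_{\mathrm{C}})\Psi=\rho$; $D_\rho$ is the set of all dilations of $\rho$. A refinement of a state $\Omega$ is a collection $\{\Psi_i\}$ of states that is a subset of some preparation test and satisfies $\sum_i\Psi_i=\Omega$. Digitalizability: there is a system $\mathrm{O}$ (an obit) such that for every system $\mathrm{X}$ there exist $k<\infty$ and channels $\mathcal C:\mathrm{X}\to\mathrm{O}^{\boxtimes k}$, $\mathcal F:\mathrm{O}^{\boxtimes k}\to\mathrm{X}$ with $\mathcal F\circ\mathcal C=\mathcal I_{\mathrm{X}}$. Information content: for $\rho\in\mathsf{St}_1(\mathrm{A})$ and positive integers $N,M$, a compression scheme is a pair $\mathcal E\in\mathsf{Tr}_1(\mathrm{A}^{\boxtimes N}\to\mathrm{O}^{\boxtimes M})$, $\mathcal D\in\mathsf{Tr}_1(\mathrm{O}^{\boxtimes M}\to\mathrm{A}^{\boxtimes N})$. $E_{N,M,\varepsilon}(\rho)$ is the set of schemes with $\sup_{\mathrm{C},\{\Psi_i\}}\sum_i\|((\mathcal D\circ\mathcal E)\boxtimes\mathcal I_{\mathrm{C}})\Psi_i-\Psi_i\|_{\rm op}<\varepsilon$, the supremum over all systems $\mathrm{C}$ and all refinements $\{\Psi_i\}\subseteq\mathsf{St}(\mathrm{A}^{\boxtimes N}\mathrm{C})$ of dilations of $\rho^{\boxtimes N}$. $R_{N,\varepsilon}(\rho):=\min\{M:E_{N,M,\varepsilon}(\rho)\ne\emptyset\}/N$, $I(\rho):=\lim_{\varepsilon\to0}\limsup_{N\to\infty}R_{N,\varepsilon}(\rho)$.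 For a state of $\mathrm{A}\mathrm{B}$, $(\mathrm{A}\mathrm{B})^{\boxtimes N}$ is identified with $\mathrm{A}^{\boxtimes N}\mathrm{B}^{\boxtimes N}$. *)

From HB Require Import structures.
From mathcomp Require Import all_boot all_order all_algebra.
From mathcomp Require Import classical_sets boolp reals ereal topology normedtype sequences.
Set Implicit Arguments. Unset Strict Implicit. Unset Printing Implicit Defensive.
Import Order.TTheory GRing.Theory Num.Theory.
Local Open Scope ring_scope.

(* Systems form a (non-strict) symmetric monoidal
   structure; V A B is the real span of Tr(A -> B) (events are identified
   operationally, see [op_sep]); tests are finite lists of events. *)
Record OPT (R : realType) := MkOPT {
  sys : Type;
  sI : sys;
  sT : sys -> sys -> sys;
  V : sys -> sys -> lmodType R;
  comp : forall A B C, V B C -> V A B -> V A C;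
  par : forall A B C D, V A B -> V C D -> V (sT A C) (sT B D);
  idt : forall A, V A A;
  asc : forall A B C, V (sT (sT A B) C) (sT A (sT B C));
  asci : forall A B C, V (sT A (sT B C)) (sT (sT A B) C);
  lu : forall A, V (sT sI A) A;  lui : forall A, V A (sT sI A);
  ru : forall A, V (sT A sI) A;  rui : forall A, V A (sT A sI);
  sw : forall A B, V (sT A B) (sT B A);
  prob : V sI sI -> R;
  test : forall A B, seq (V A B) -> Prop;
  compDl : forall A B C (f g : V B C) (h : V A B), comp (f + g) h = comp f h + comp g h;
  compZl : forall A B C (a : R) (f : V B C) (h : V A B), comp (a *: f) h = a *: comp f h;
  compDr : forall A B C (f : V B C) (g h : V A B), comp f (g + h) = comp f g + comp f h;
  compZr : forall A B C (a : R) (f : V B C) (h : V A B), comp f (a *: h) = a *: comp f h;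
  parDl : forall A B C D (f g : V A B) (h : V C D), par (f + g) h = par f h + par g h;
  parZl : forall A B C D (a : R) (f : V A B) (h : V C D), par (a *: f) h = a *: par f h;
  parDr : forall A B C D (f : V A B) (g h : V C D), par f (g + h) = par f g + par f h;
  parZr : forall A B C D (a : R) (f : V A B) (h : V C D), par f (a *: h) = a *: par f h;
  compA : forall A B C D (f : V C D) (g : V B C) (h : V A B),
      comp f (comp g h) = comp (comp f g) h;
  comp1f : forall A B (f : V A B), comp (idt B) f = f;
  compf1 : forall A B (f : V A B), comp f (idt A) = f;
  par_comp : forall A B C A' B' C' (f : V B C) (g : V A B) (f' : V B' C') (g' : V A' B'),
      par (comp f g) (comp f' g') = comp (par f f') (par g g');
  par_id : forall A B, par (idt A) (idt B) = idt (sT A B);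
  asc_nat : forall A B C A' B' C' (f : V A A') (g : V B B') (h : V C C'),
      comp (asc A' B' C') (par (par f g) h) = comp (par f (par g h)) (asc A B C);
  lu_nat : forall A B (f : V A B), comp (lu B) (par (idt sI) f) = comp f (lu A);
  ru_nat : forall A B (f : V A B), comp (ru B) (par f (idt sI)) = comp f (ru A);
  sw_nat : forall A B C D (f : V A B) (g : V C D),
      comp (sw B D) (par f g) = comp (par g f) (sw A C);
  ascK : forall A B C, comp (asci A B C) (asc A B C) = idt _;
  asciK : forall A B C, comp (asc A B C) (asci A B C) = idt _;
  luK : forall A, comp (lui A) (lu A) = idt _;
  luiK : forall A, comp (lu A) (lui A) = idt _;
  ruK : forall A, comp (rui A) (ru A) = idt _;
  ruiK : forall A, comp (ru A) (rui A) = idt _;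
  swK : forall A B, comp (sw B A) (sw A B) = idt _;
  pentagon : forall A B C D,
      comp (asc A B (sT C D)) (asc (sT A B) C D)
      = comp (par (idt A) (asc B C D)) (comp (asc A (sT B C) D) (par (asc A B C) (idt D)));
  triangle : forall A B,
      comp (par (idt A) (lu B)) (asc A sI B) = par (ru A) (idt B);
  hexagon : forall A B C,
      comp (asc B C A) (comp (sw A (sT B C)) (asc A B C))
      = comp (par (idt B) (sw A C)) (comp (asc B A C) (par (sw A B) (idt C)));
  probD : forall s t : V sI sI, prob (s + t) = prob s + prob t;
  probZ : forall (a : R) (s : V sI sI), prob (a *: s) = a * prob s;
  prob1 : prob (idt sI) = 1;
  scalarE : forall s : V sI sI, s = prob s *: idt sI;
  test_seq : forall A B C (t : seq (V A B)) (u : seq (V B C)),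
      test t -> test u -> test [seq comp g f | f <- t, g <- u];
  test_par : forall A B C D (t : seq (V A B)) (u : seq (V C D)),
      test t -> test u -> test [seq par f g | f <- t, g <- u];
  test_perm : forall A B (t u : seq (V A B)), perm_eq t u -> test t -> test u;
  test_coarse : forall A B (f g : V A B) (t : seq (V A B)),
      test (f :: g :: t) -> test ((f + g) :: t);
  test_sum : forall A B (t : seq (V A B)), test t -> test [:: \sum_(f <- t) f];
  test_id : forall A, test [:: idt A];
  test_asc : forall A B C, test [:: asc A B C];
  test_asci : forall A B C, test [:: asci A B C];
  test_lu : forall A, test [:: lu A];
  test_lui : forall A, test [:: lui A];
  test_ru : forall A, test [:: ru A];
  test_rui : forall A, test [:: rui A];
  test_sw : forall A B, test [:: sw A B];
  test_prob : forall t : seq (V sI sI), test t ->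
      (forall s, s \in t -> 0 <= prob s) /\ \sum_(s <- t) prob s = 1;
  op_sep : forall A B (f : V A B),
      (forall C (rho : V sI (sT A C)) (a : V (sT B C) sI),
          (exists t, test t /\ rho \in t) -> (exists t, test t /\ a \in t) ->
          prob (comp a (comp (par f (idt C)) rho)) = 0) -> f = 0
}.

Arguments sI {R} o. Arguments sT {R} o. Arguments V {R} o. Arguments comp {R o A B C} : rename.
Arguments par {R o A B C D} : rename. Arguments idt {R o} : rename. Arguments asc {R o} : rename.
Arguments asci {R o} : rename. Arguments lu {R o} : rename. Arguments lui {R o} : rename. Arguments ru {R o} : rename.
Arguments rui {R o} : rename. Arguments sw {R o} : rename. Arguments prob {R o} : rename. Arguments test {R o A B} : rename.

Section OPTDefs.
Context {R : realType} (T : OPT R).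
Local Notation sys := (sys T).
Local Notation V := (V T).
Local Notation I := (sI T).
Local Notation sT := (sT T).

Definition event {A B : sys} (f : V A B) : Prop := exists t, test t /\ f \in t.
(* Tr_1(A -> B): deterministic transformations = single-outcome tests *)
Definition channel {A B : sys} (f : V A B) : Prop := test [:: f].
Definition state (A : sys) (rho : V I A) := event rho.
Definition nstate (A : sys) (rho : V I A) := channel rho.
Definition effect (A : sys) (a : V A I) := event a.

Definition pairing {A : sys} (a : V A I) (rho : V I A) : R := prob (comp a rho).

(* strong causality; the uniqueness of the deterministic effect, stated in the
   paper as a consequence, is included explicitly *)
Definition strongly_causal : Prop :=
  (forall (A B C : sys) (t : seq (V A B)) (u : nat -> seq (V B C)),
      test t -> (forall i, (i < size t)%N -> test (u i)) ->
      test (flatten [seq [seq comp g (nth 0 t i) | g <- u i] | i <- iota 0 (size t)]))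
  /\ (forall A : sys, exists! e : V A I, channel e).

Definition is_det_effect (e : forall A : sys, V A I) : Prop :=
  forall A, channel (e A) /\ forall f : V A I, channel f -> f = e A.

(* n-fold parallel composition of a system: A^0 = I, A^1 = A, A^(n+1) = A (A^n) *)
Fixpoint spow1 (A : sys) (k : nat) : sys :=
  match k with 0 => A | S k' => sT A (spow1 A k') end.
Definition spow (A : sys) (n : nat) : sys :=
  match n with 0 => I | S k => spow1 A k end.

Definition stensor {A B : sys} (rho : V I A) (sig : V I B) : V I (sT A B) :=
  comp (par rho sig) (lui I).

Fixpoint stpow1 {A : sys} (rho : V I A) (k : nat) : V I (spow1 A k) :=
  match k as k0 return V I (spow1 A k0) with
  | 0 => rho
  | S k' => stensor rho (stpow1 rho k')
  end.
Definition stpow {A : sys} (rho : V I A) (n : nat) : V I (spow A n) :=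
  match n as n0 return V I (spow A n0) with
  | 0 => idt I
  | S k => stpow1 rho k
  end.

Definition digitalizable (O : sys) : Prop :=
  forall X : sys, exists (k : nat) (Cc : V X (spow O k)) (F : V (spow O k) X),
      channel Cc /\ channel F /\ comp F Cc = idt X.

Variable e : forall A : sys, V A I.

Definition margA {A B : sys} (Psi : V I (sT A B)) : V I A :=
  comp (ru A) (comp (par (idt A) (e B)) Psi).
Definition margB {A B : sys} (Psi : V I (sT A B)) : V I B :=
  comp (lu B) (comp (par (e A) (idt B)) Psi).

Local Open Scope ereal_scope.

Definition opnorm {A : sys} (d : V I A) : \bar R :=
  ereal_sup [set (prob (comp ((2%:R : R) *: a - e A) d))%:E | a in [set a | effect a]].

Definition dilation {A C : sys} (rho : V I A) (Psi : V I (sT A C)) : Prop :=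
  state Psi /\ margA Psi = rho.

Definition refinement {A : sys} (s : seq (V I A)) (Omega : V I A) : Prop :=
  (exists r t, test t /\ perm_eq (s ++ r) t) /\ (\sum_(x <- s) x)%R = Omega.

Variable O : sys.

Definition good_scheme {A : sys} (rho : V I A) (N M : nat) (eps : R)
    (E : V (spow A N) (spow O M)) (D : V (spow O M) (spow A N)) : Prop :=
  channel E /\ channel D /\
  ereal_sup [set r | exists (C : sys) (s : seq (V I (sT (spow A N) C))),
      (exists Om, dilation (stpow rho N) Om /\ refinement s Om) /\
      r = \sum_(x <- s) opnorm (comp (par (comp D E) (idt C)) x - x)%R] < eps%:E.

Definition rate {A : sys} (rho : V I A) (N : nat) (eps : R) : \bar R :=
  ereal_inf [set ((M%:R : R) / (N%:R : R))%R%:E | M in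
     [set M : nat | (0 < M)%N /\ exists E D, @good_scheme A rho N M eps E D]].

Definition info {A : sys} (rho : V I A) : \bar R :=
  lim ((fun eps : R => limn_esup (fun N => rate rho N eps)) @ (0 : R)^'+)%classic.

End OPTDefs.

(* Given schemes (E_A, D_A) compressing rho^N into M_A obits and (E_B, D_B)
   compressing sigma^N into M_B obits, compress Psi^N by reordering
   (AB)^N into A^N B^N, applying E_A (x) E_B and concatenating the obits.
   Writing G_A = D_A E_A and G_B = D_B E_B, the error G_A (x) G_B - 1 splits
   as (G_A (x) 1)(1 (x) G_B) - (1 (x) G_B) plus (1 (x) G_B) - 1.  Applied to
   a refinement of a dilation of Psi^N, each term is the error of one of the
   given schemes on a refinement of a dilation of rho^N (resp. sigma^N): the
   unused factor B^N (resp. A^N) is simply moved into the environment, and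
   channels do not increase the operational norm.  Hence
   R_{N,eA+eB}(Psi) <= R_{N,eA}(rho) + R_{N,eB}(sigma), and the claim follows
   by taking limsup in N and letting eps go to 0. *)
From Pilot Require Import Defs.
From HB Require Import structures.
From mathcomp Require Import all_boot all_order all_algebra.
From mathcomp Require Import classical_sets boolp reals ereal topology normedtype sequences realfun.
From mathcomp Require Import lra.
Set Implicit Arguments. Unset Strict Implicit. Unset Printing Implicit Defensive.
Import Order.TTheory GRing.Theory Num.Theory.
Import Defs.

Section SymmetricMonoidal.
Context {R : realType} (T : OPT R).
Local Notation V := (V T).
Local Notation I := (sI T).
Local Notation sT := (sT T).
Local Open Scope ring_scope.

Lemma comp0r A B C (f : V B C) : comp f (0 : V A B) = 0.
Proof. by rewrite -(scale0r (0 : V A B)) compZr scale0r. Qed.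

Lemma compNr A B C (f : V B C) (g : V A B) : comp f (- g) = - comp f g.
Proof. by rewrite -scaleN1r compZr scaleN1r. Qed.

Lemma compBr A B C (f : V B C) (g h : V A B) : comp f (g - h) = comp f g - comp f h.
Proof. by rewrite compDr compNr. Qed.

Lemma compNl A B C (f : V B C) (g : V A B) : comp (- f) g = - comp f g.
Proof. by rewrite -scaleN1r compZl scaleN1r. Qed.

Lemma compBl A B C (f h : V B C) (g : V A B) : comp (f - h) g = comp f g - comp h g.
Proof. by rewrite compDl compNl. Qed.

Lemma comp_sum A B C (f : V B C) (s : seq (V A B)) :
  comp f (\sum_(x <- s) x) = \sum_(x <- s) comp f x.
Proof.
elim: s => [|x s IH]; first by rewrite !big_nil comp0r.
by rewrite !big_cons compDr IH.
Qed.

Lemma par_idl_comp A B C D (g : V B C) (h : V A B) :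
  par (idt D) (comp g h) = comp (par (idt D) g) (par (idt D) h).
Proof. by rewrite -par_comp comp1f. Qed.

Lemma par_idr_comp A B C D (g : V B C) (h : V A B) :
  par (comp g h) (idt D) = comp (par g (idt D)) (par h (idt D)).
Proof. by rewrite -par_comp comp1f. Qed.

Lemma parEl A B C D (f : V A B) (g : V C D) :
  par f g = comp (par f (idt D)) (par (idt A) g).
Proof. by rewrite -par_comp comp1f compf1. Qed.

Lemma parEr A B C D (f : V A B) (g : V C D) :
  par f g = comp (par (idt B) g) (par f (idt C)).
Proof. by rewrite -par_comp comp1f compf1. Qed.

Lemma asci_nat A B C A' B' C' (f : V A A') (g : V B B') (h : V C C') :
  comp (asci A' B' C') (par f (par g h)) = comp (par (par f g) h) (asci A B C).
Proof.
rewrite -[LHS]compf1 -(asciK A B C) compA -(compA _ _ (asc A B C)) -asc_nat.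
by rewrite compA ascK comp1f.
Qed.

Lemma par_idIl_inj A B (f g : V A B) : par (idt I) f = par (idt I) g -> f = g.
Proof. by move=> H; rewrite -[f]compf1 -[g]compf1 -(luiK A) !compA -!lu_nat H. Qed.

Lemma par_idIr_inj A B (f g : V A B) : par f (idt I) = par g (idt I) -> f = g.
Proof. by move=> H; rewrite -[f]compf1 -[g]compf1 -(ruiK A) !compA -!ru_nat H. Qed.

Lemma comp_cancelr A B C (f g : V B C) (h : V A B) (hi : V B A) :
  comp h hi = idt B -> comp f h = comp g h -> f = g.
Proof. by move=> hK H; rewrite -[f]compf1 -[g]compf1 -hK !compA H. Qed.

Lemma comp_cancell A B C (f g : V A B) (h : V B C) (hi : V C B) :
  comp hi h = idt B -> comp h f = comp h g -> f = g.
Proof. by move=> hK H; rewrite -[f]comp1f -[g]comp1f -hK -!compA H. Qed.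

(* Kelly's consequences of the pentagon, triangle and hexagon axioms. *)
Lemma lu_asc A B : comp (lu (sT A B)) (asc I A B) = par (lu A) (idt B).
Proof.
apply: par_idIl_inj.
pose Phi := comp (asc I (sT I A) B) (par (asc I I A) (idt B)).
pose Phii := comp (par (asci I I A) (idt B)) (asci I (sT I A) B).
apply: (@comp_cancelr _ _ _ _ _ Phi Phii).
  by rewrite /Phi /Phii -compA (compA (par _ _)) -par_idr_comp asciK par_id comp1f asciK.
transitivity (comp (par (ru I) (idt (sT A B))) (asc (sT I I) A B)).
  by rewrite par_idl_comp -compA /Phi -pentagon compA triangle.
by rewrite /Phi compA -asc_nat -compA -par_idr_comp triangle asc_nat par_id.
Qed.

Lemma asc_ru A B : comp (par (idt A) (ru B)) (asc A B I) = ru (sT A B).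
Proof.
apply: par_idIr_inj.
apply: (@comp_cancell _ _ _ _ _ (asc A B I) (asci A B I)); first exact: ascK.
transitivity (comp (par (idt A) (par (idt B) (lu I)))
     (comp (asc A B (sT I I)) (asc (sT A B) I I))).
  rewrite par_idr_comp compA (asc_nat (idt A) (ru B) (idt I)).
  by rewrite -(triangle B I) par_idl_comp -!compA -pentagon.
rewrite -(triangle (sT A B) I) -[idt (sT A B)]par_id [RHS]compA.
by rewrite (asc_nat (idt A) (idt B) (lu I)) -compA.
Qed.

Lemma lu_sw A : comp (lu A) (sw A I) = ru A.
Proof.
apply: par_idIr_inj.
apply: (@comp_cancell _ _ _ _ _ (sw A I) (sw I A)); first exact: swK.
transitivity (comp (lu (sT I A)) (comp (asc I I A) (comp (sw A (sT I I)) (asc A I I)))).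
  by rewrite (hexagon A I I) compA lu_nat -compA (compA (lu _) (asc _ _ _)) lu_asc -par_idr_comp.
by rewrite compA lu_asc compA -(sw_nat (idt A) (lu I)) -compA triangle.
Qed.

Lemma ru_sw B : comp (ru B) (sw I B) = lu B.
Proof. by rewrite -lu_sw -compA swK compf1. Qed.

Lemma triangle_asci A B : comp (par (ru A) (idt B)) (asci A I B) = par (idt A) (lu B).
Proof. by rewrite -triangle -compA asciK compf1. Qed.

Definition swap12 (X Y Z : sys T) : V (sT Y (sT X Z)) (sT X (sT Y Z)) :=
  comp (asc X Y Z) (comp (par (sw Y X) (idt Z)) (asci Y X Z)).

Lemma swap12K X Y Z : comp (swap12 Y X Z) (swap12 X Y Z) = idt _.
Proof.
rewrite /swap12 -!compA (compA (asci X Y Z)) ascK comp1f (compA (par _ _)).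
by rewrite -par_idr_comp swK par_id comp1f asciK.
Qed.

Definition interchange (A B A' B' : sys T) :
    V (sT (sT A B) (sT A' B')) (sT (sT A A') (sT B B')) :=
  comp (asci A A' (sT B B')) (comp (par (idt A) (swap12 A' B B')) (asc A B (sT A' B'))).

Lemma interchangeK A B A' B' :
  comp (interchange A A' B B') (interchange A B A' B') = idt _.
Proof.
rewrite /interchange -!compA (compA (asc A A' _)) asciK comp1f (compA (par _ _)).
by rewrite -par_idl_comp swap12K par_id comp1f ascK.
Qed.

Definition swap_asc (X Y C : sys T) : V (sT (sT X Y) C) (sT Y (sT X C)) :=
  comp (asc Y X C) (par (sw X Y) (idt C)).

Definition swap_asci (X Y C : sys T) : V (sT Y (sT X C)) (sT (sT X Y) C) :=
  comp (par (sw Y X) (idt C)) (asci Y X C).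

Lemma swap_ascK X Y C : comp (swap_asci X Y C) (swap_asc X Y C) = idt _.
Proof.
by rewrite /swap_asc /swap_asci -compA (compA (asci Y X C)) ascK comp1f -par_idr_comp swK par_id.
Qed.

Lemma par_asc_conj X Y C (f : V X X) :
  comp (asci X Y C) (comp (par f (idt (sT Y C))) (asc X Y C)) = par (par f (idt Y)) (idt C).
Proof. by rewrite -[idt (sT Y C)]par_id compA asci_nat -compA ascK compf1. Qed.

Lemma par_swap_asc_conj X Y C (g : V Y Y) :
  comp (swap_asci X Y C) (comp (par g (idt (sT X C))) (swap_asc X Y C))
  = par (par (idt X) g) (idt C).
Proof.
rewrite /swap_asci /swap_asc -[idt (sT X C)]par_id -compA (compA (asci Y X C)) asci_nat.
rewrite -(compA (par (par g (idt X)) (idt C))) (compA (asci Y X C) (asc Y X C)) ascK comp1f.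
by rewrite compA -par_idr_comp -par_idr_comp sw_nat -compA swK compf1.
Qed.

End SymmetricMonoidal.

Section Discarding.
Context {R : realType} (T : OPT R).
Local Notation V := (V T).
Local Notation I := (sI T).
Local Notation sT := (sT T).
Local Open Scope ring_scope.
Variable e : forall A : sys T, V A I.
Hypothesis He : is_det_effect e.

Lemma channel_comp A B C (f : V A B) (g : V B C) :
  channel f -> channel g -> channel (comp g f).
Proof. exact: test_seq. Qed.

Lemma channel_par A B C D (f : V A B) (g : V C D) :
  channel f -> channel g -> channel (par f g).
Proof. exact: test_par. Qed.

Lemma channel_id (A : sys T) : channel (idt A). Proof. exact: test_id. Qed.
Lemma channel_asc (A B C : sys T) : channel (asc A B C). Proof. exact: test_asc. Qed.
Lemma channel_asci (A B C : sys T) : channel (asci A B C). Proof. exact: test_asci. Qed.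
Lemma channel_lu (A : sys T) : channel (lu A). Proof. exact: test_lu. Qed.
Lemma channel_ru (A : sys T) : channel (ru A). Proof. exact: test_ru. Qed.
Lemma channel_sw (A B : sys T) : channel (sw A B). Proof. exact: test_sw. Qed.
Lemma channel_e (A : sys T) : channel (e A). Proof. exact: (He A).1. Qed.

Lemma channel_swap12 (X Y Z : sys T) : channel (swap12 X Y Z).
Proof.
apply: channel_comp (channel_asc _ _ _).
exact: channel_comp (channel_asci _ _ _) (channel_par (channel_sw _ _) (channel_id _)).
Qed.

Lemma channel_interchange (A B A' B' : sys T) : channel (interchange A B A' B').
Proof.
apply: channel_comp (channel_asci _ _ _).
exact: channel_comp (channel_asc _ _ _) (channel_par (channel_id _) (channel_swap12 _ _ _)).
Qed.

Lemma e_comp_channel A B (P : V A B) : channel P -> comp (e B) P = e A.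
Proof. by move=> HP; apply: (He A).2; apply: channel_comp HP (channel_e B). Qed.

Lemma event_comp_channel A B C (f : V A B) (g : V B C) :
  event f -> channel g -> event (comp g f).
Proof.
move=> [t [Ht ft]] Hg; exists [seq comp g0 f0 | f0 <- t, g0 <- [:: g]].
by split; [exact: test_seq | apply/allpairsP; exists (f, g); rewrite ft inE eqxx].
Qed.

Lemma event_precomp_channel A B C (P : V A B) (a : V B C) :
  event a -> channel P -> event (comp a P).
Proof.
move=> [t [Ht at_]] HP; exists [seq comp g0 f0 | f0 <- [:: P], g0 <- t].
by split; [exact: test_seq | apply/allpairsP; exists (P, a); rewrite at_ inE eqxx].
Qed.

Definition discr X Y : V (sT X Y) X := comp (ru X) (par (idt X) (e Y)).
Definition discl X Y : V (sT X Y) Y := comp (lu Y) (par (e X) (idt Y)).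

Lemma margAE X C (Om : V I (sT X C)) : margA e Om = comp (discr X C) Om.
Proof. by rewrite /margA /discr compA. Qed.

Lemma margBE X C (Om : V I (sT X C)) : margB e Om = comp (discl X C) Om.
Proof. by rewrite /margB /discl compA. Qed.

Lemma channel_discr (X Y : sys T) : channel (discr X Y).
Proof. exact: channel_comp (channel_par (channel_id _) (channel_e _)) (channel_ru _). Qed.

Lemma channel_discl (X Y : sys T) : channel (discl X Y).
Proof. exact: channel_comp (channel_par (channel_e _) (channel_id _)) (channel_lu _). Qed.

Lemma discr_nat X X' C (f : V X X') : comp (discr X' C) (par f (idt C)) = comp f (discr X C).
Proof. by rewrite /discr -compA -par_comp comp1f compf1 (parEl f (e C)) compA ru_nat -compA. Qed.

Lemma discl_nat C Y Y' (f : V Y Y') : comp (discl C Y') (par (idt C) f) = comp f (discl C Y).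
Proof. by rewrite /discl -compA -par_comp comp1f compf1 (parEr (e C) f) compA lu_nat -compA. Qed.

Lemma discr_par_channel X Y (G : V Y Y) : channel G -> comp (discr X Y) (par (idt X) G) = discr X Y.
Proof. by move=> HG; rewrite /discr -compA -par_idl_comp e_comp_channel. Qed.

Lemma discr_sT X Y C : discr X (sT Y C) = comp (discr X Y) (par (idt X) (discr Y C)).
Proof. by rewrite -compA -par_idl_comp /discr (e_comp_channel (channel_discr Y C)). Qed.

Lemma discl_sT X Y C : discl (sT X Y) C = comp (discl Y C) (par (discl X Y) (idt C)).
Proof. by rewrite -compA -par_idr_comp /discl (e_comp_channel (channel_discl X Y)). Qed.

Lemma par_discr_asc X Y C : comp (par (idt X) (discr Y C)) (asc X Y C) = discr (sT X Y) C.
Proof.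
by rewrite /discr par_idl_comp -compA -(asc_nat (idt X) (idt Y) (e C)) compA asc_ru par_id.
Qed.

Lemma discr_asc X Y C :
  comp (discr X (sT Y C)) (asc X Y C) = comp (discr X Y) (discr (sT X Y) C).
Proof. by rewrite discr_sT -compA par_discr_asc. Qed.

Lemma discr_asci X Y C : comp (discr (sT X Y) C) (asci X Y C) = par (idt X) (discr Y C).
Proof. by rewrite -par_discr_asc -compA asciK compf1. Qed.

Lemma discl_asc X Y Z : comp (discl X (sT Y Z)) (asc X Y Z) = par (discl X Y) (idt Z).
Proof.
rewrite /discl -[idt (sT Y Z)]par_id -compA -(asc_nat (e X) (idt Y) (idt Z)).
by rewrite compA lu_asc -par_idr_comp.
Qed.

Lemma par_discl_asci X Y Z : comp (par (discl X Y) (idt Z)) (asci X Y Z) = discl X (sT Y Z).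
Proof. by rewrite -discl_asc -compA asciK compf1. Qed.

Lemma par_discr_asci X Y Z :
  comp (par (discr X Y) (idt Z)) (asci X Y Z) = par (idt X) (discl Y Z).
Proof.
rewrite /discr /discl par_idr_comp -compA -(asci_nat (idt X) (e Y) (idt Z)).
by rewrite compA triangle_asci -par_idl_comp.
Qed.

Lemma par_discl_asc X Y Z :
  comp (par (idt X) (discl Y Z)) (asc X Y Z) = par (discr X Y) (idt Z).
Proof.
rewrite /discr /discl par_idl_comp -compA -(asc_nat (idt X) (e Y) (idt Z)).
by rewrite compA triangle -par_idr_comp.
Qed.

Lemma discr_sw X Y : comp (discr Y X) (sw X Y) = discl X Y.
Proof. by rewrite /discr -compA -(sw_nat (e X) (idt Y)) compA ru_sw. Qed.

Lemma discl_sw X Y : comp (discl Y X) (sw X Y) = discr X Y.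
Proof. by rewrite /discl -compA -(sw_nat (idt X) (e Y)) compA lu_sw. Qed.

Lemma discr_interchange A B A' B' :
  comp (discr (sT A A') (sT B B')) (interchange A B A' B') = par (discr A B) (discr A' B').
Proof.
have E1 : comp (par (idt (sT A A')) (discr B B')) (asci A A' (sT B B'))
    = comp (asci A A' B) (par (idt A) (par (idt A') (discr B B'))).
  by rewrite asci_nat par_id.
have E2 : comp (discr A' B) (comp (par (idt A') (discr B B')) (swap12 A' B B'))
    = comp (discr A' B') (discl B (sT A' B')).
  rewrite /swap12 (compA (par (idt A') (discr B B'))) par_discr_asc.
  rewrite (compA (discr (sT A' B) B')) discr_nat -compA discr_asci compA discr_sw.
  by rewrite discl_nat.
rewrite discr_sT /interchange -compA (compA (par (idt (sT A A')) (discr B B'))) E1.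
rewrite -(compA (asci A A' B)) (compA (discr (sT A A') B)) discr_asci.
rewrite (compA (par (idt A) (par (idt A') (discr B B')))) -par_idl_comp.
rewrite (compA (par (idt A) (discr A' B))) -par_idl_comp E2 par_idl_comp.
by rewrite -(compA (par (idt A) (discr A' B'))) par_discl_asc -par_comp comp1f compf1.
Qed.

Lemma discl_interchange A B A' B' :
  comp (discl (sT A A') (sT B B')) (interchange A B A' B') = par (discl A B) (discl A' B').
Proof.
have E3 : comp (discl A' (sT B B')) (swap12 A' B B') = par (idt B) (discl A' B').
  rewrite /swap12 (compA (discl A' _)) discl_asc (compA (par (discl A' B) _)).
  by rewrite -par_idr_comp discl_sw par_discr_asci.
rewrite discl_sT /interchange -(compA (discl A' _)) (compA (par (discl A A') (idt _))).
rewrite par_discl_asci (compA (discl A _)) discl_nat -(compA (swap12 A' B B')) discl_asc.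
by rewrite compA E3 -par_comp comp1f compf1.
Qed.

Fixpoint unzip (A B : sys T) (k : nat) :
    V (spow1 (sT A B) k) (sT (spow1 A k) (spow1 B k)) :=
  match k as k0 return V (spow1 (sT A B) k0) (sT (spow1 A k0) (spow1 B k0)) with
  | 0 => idt _
  | S k' => comp (interchange A B (spow1 A k') (spow1 B k')) (par (idt (sT A B)) (unzip A B k'))
  end.

Fixpoint zip (A B : sys T) (k : nat) :
    V (sT (spow1 A k) (spow1 B k)) (spow1 (sT A B) k) :=
  match k as k0 return V (sT (spow1 A k0) (spow1 B k0)) (spow1 (sT A B) k0) with
  | 0 => idt _
  | S k' => comp (par (idt (sT A B)) (zip A B k')) (interchange A (spow1 A k') B (spow1 B k'))
  end.

Fixpoint tpow1 (X Y : sys T) (f : V X Y) (k : nat) : V (spow1 X k) (spow1 Y k) :=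
  match k as k0 return V (spow1 X k0) (spow1 Y k0) with
  | 0 => f
  | S k' => par f (tpow1 f k')
  end.

Lemma unzipK A B k : comp (zip A B k) (unzip A B k) = idt _.
Proof.
elim: k => [|k IH] /=; first exact: comp1f.
by rewrite -compA (compA (interchange _ _ _ _)) interchangeK comp1f -par_idl_comp IH par_id.
Qed.

Lemma channel_unzip A B k : channel (unzip A B k).
Proof.
elim: k => [|k IH] /=; first exact: channel_id.
exact: channel_comp (channel_par (channel_id _) IH) (channel_interchange _ _ _ _).
Qed.

Lemma channel_zip A B k : channel (zip A B k).
Proof.
elim: k => [|k IH] /=; first exact: channel_id.
exact: channel_comp (channel_interchange _ _ _ _) (channel_par (channel_id _) IH).
Qed.

Lemma discr_unzip A B k :
  comp (discr (spow1 A k) (spow1 B k)) (unzip A B k) = tpow1 (discr A B) k.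
Proof.
elim: k => [|k IH] /=; first exact: compf1.
by rewrite compA discr_interchange -par_comp compf1 IH.
Qed.

Lemma discl_unzip A B k :
  comp (discl (spow1 A k) (spow1 B k)) (unzip A B k) = tpow1 (discl A B) k.
Proof.
elim: k => [|k IH] /=; first exact: compf1.
by rewrite compA discl_interchange -par_comp compf1 IH.
Qed.

Lemma stpow1_comp X Y (f : V X Y) (rho : V I X) k :
  stpow1 (comp f rho) k = comp (tpow1 f k) (stpow1 rho k).
Proof. by elim: k => [|k IH] //=; rewrite /stensor IH par_comp compA. Qed.

Variable O : sys T.

Fixpoint obits_cat (m n : nat) : V (sT (spow1 O m) (spow1 O n)) (spow1 O (m + n.+1)) :=
  match m as m0 return V (sT (spow1 O m0) (spow1 O n)) (spow1 O (m0 + n.+1)) with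
  | 0 => idt _
  | S m' => comp (par (idt O) (obits_cat m' n)) (asc O (spow1 O m') (spow1 O n))
  end.

Fixpoint obits_split (m n : nat) : V (spow1 O (m + n.+1)) (sT (spow1 O m) (spow1 O n)) :=
  match m as m0 return V (spow1 O (m0 + n.+1)) (sT (spow1 O m0) (spow1 O n)) with
  | 0 => idt _
  | S m' => comp (asci O (spow1 O m') (spow1 O n)) (par (idt O) (obits_split m' n))
  end.

Lemma obits_catK m n : comp (obits_split m n) (obits_cat m n) = idt _.
Proof.
elim: m => [|m IH] /=; first exact: comp1f.
by rewrite -compA (compA (par _ _)) -par_idl_comp IH par_id comp1f ascK.
Qed.

Lemma channel_obits_cat m n : channel (obits_cat m n).
Proof.
elim: m => [|m IH] /=; first exact: channel_id.
exact: channel_comp (channel_asc _ _ _) (channel_par (channel_id _) IH).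
Qed.

Lemma channel_obits_split m n : channel (obits_split m n).
Proof.
elim: m => [|m IH] /=; first exact: channel_id.
exact: channel_comp (channel_par (channel_id _) IH) (channel_asci _ _ _).
Qed.

Local Open Scope ereal_scope.

Lemma opnorm_channel A B (P : V A B) (d : V I A) : channel P ->
  opnorm e (comp P d) <= opnorm e d.
Proof.
move=> HP; apply: ge_ereal_sup => _ [a Ha <-].
have -> : comp ((2%:R : R) *: a - e B)%R (comp P d) = comp ((2%:R : R) *: comp a P - e A)%R d.
  by rewrite compA compBl compZl e_comp_channel.
by apply: ereal_sup_ubound; exists (comp a P) => //; exact: event_precomp_channel.
Qed.

Lemma opnormD A (d1 d2 : V I A) : opnorm e (d1 + d2)%R <= opnorm e d1 + opnorm e d2.
Proof.
apply: ge_ereal_sup => _ [a Ha <-].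
by rewrite compDr probD EFinD; apply: leeD; apply: ereal_sup_ubound; exists a.
Qed.

Lemma opnorm_conj X Y (P : V X Y) (Pi : V Y X) (g : V Y Y) (d : V I X) :
  channel Pi -> comp Pi P = idt X ->
  opnorm e (comp (comp Pi (comp g P)) d - d)%R <= opnorm e (comp g (comp P d) - comp P d)%R.
Proof.
move=> hPi hK; apply: le_trans (opnorm_channel _ hPi).
by rewrite compBr (compA Pi P) hK comp1f !compA.
Qed.

(* Through Sh : Z -> X Y, regroup Z C as X (Y C) (resp. Y (X C)), moving Y (resp. X)
   into the environment; absorbB first applies GB to Y. *)
Definition absorbB (X Y Z C : sys T) (Sh : V Z (sT X Y)) (GB : V Y Y) :
    V (sT Z C) (sT X (sT Y C)) :=
  comp (asc X Y C) (comp (par (par (idt X) GB) (idt C)) (par Sh (idt C))).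

Definition absorbA (X Y Z C : sys T) (Sh : V Z (sT X Y)) : V (sT Z C) (sT Y (sT X C)) :=
  comp (swap_asc X Y C) (par Sh (idt C)).

Lemma channel_absorbB X Y Z C (Sh : V Z (sT X Y)) (GB : V Y Y) :
  channel Sh -> channel GB -> channel (absorbB C Sh GB).
Proof.
move=> hSh hGB; apply: channel_comp (channel_asc _ _ _).
exact: channel_comp (channel_par hSh (channel_id _))
                    (channel_par (channel_par (channel_id _) hGB) (channel_id _)).
Qed.

Lemma channel_absorbA X Y Z C (Sh : V Z (sT X Y)) : channel Sh -> channel (absorbA C Sh).
Proof.
move=> hSh; apply: channel_comp (channel_par hSh (channel_id _)) _.
exact: channel_comp (channel_par (channel_sw _ _) (channel_id _)) (channel_asc _ _ _).
Qed.

(* The error of G_A (x) G_B telescopes through (1 (x) G_B), and each of the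
   two pieces is a conjugate of an error of G_A or of G_B alone. *)
Lemma opnorm_conj_par_le X Y Z C (Sh : V Z (sT X Y)) (Shi : V (sT X Y) Z)
    (GA : V X X) (GB : V Y Y) (x : V I (sT Z C)) :
  comp Shi Sh = idt Z -> channel Shi ->
  opnorm e (comp (par (comp Shi (comp (par GA GB) Sh)) (idt C)) x - x)%R <=
  opnorm e (comp (par GA (idt (sT Y C))) (comp (absorbB C Sh GB) x)
            - comp (absorbB C Sh GB) x)%R +
  opnorm e (comp (par GB (idt (sT X C))) (comp (absorbA C Sh) x)
            - comp (absorbA C Sh) x)%R.
Proof.
move=> hK hShi; rewrite !par_idr_comp.
apply: le_trans (opnorm_conj _ _ (channel_par hShi (channel_id C)) _) _.
  by rewrite -par_idr_comp hK par_id.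
set x' := comp (par Sh (idt C)) x.
set y := comp (par (par (idt X) GB) (idt C)) x'.
have -> : (comp (par (par GA GB) (idt C)) x' - x'
    = (comp (par (par GA (idt Y)) (idt C)) y - y) + (y - x'))%R.
  by rewrite addrA subrK /y (parEl GA GB) par_idr_comp compA.
apply: le_trans (opnormD _ _) (leeD _ _).
  rewrite -(par_asc_conj Y C GA).
  apply: le_trans (opnorm_conj _ _ (channel_asci _ _ _) (ascK _ _ _)) _.
  by rewrite /absorbB /y /x' -!compA.
rewrite /y -(par_swap_asc_conj X C GB).
apply: le_trans (opnorm_conj _ _ _ (swap_ascK _ _ _)) _.
  exact: channel_comp (channel_asci _ _ _) (channel_par (channel_sw _ _) (channel_id _)).
by rewrite /absorbA /x' -compA.
Qed.

Lemma refinement_channel A B (W : V A B) s Om : channel W -> refinement s Om ->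
  refinement (map (comp W) s) (comp W Om).
Proof.
move=> HW [[r [t [Ht Hp]]] Hs]; split; last by rewrite -Hs comp_sum big_map.
exists (map (comp W) r), (map (comp W) t); split; last by rewrite -map_cat perm_map.
have -> : map (comp W) t = [seq comp g f | f <- t, g <- [:: W]].
  by elim: t {Hp Ht} => //= a t ->.
exact: test_seq.
Qed.

Lemma dilation_absorbB A B k C (Psi : V I (sT A B)) (Om : V I (sT (spow1 (sT A B) k) C))
    (GB : V (spow1 B k) (spow1 B k)) :
  channel GB -> dilation e (stpow1 Psi k) Om ->
  dilation e (stpow1 (margA e Psi) k) (comp (absorbB C (unzip A B k) GB) Om).
Proof.
move=> HG [HOm HO]; split.
  exact: event_comp_channel HOm (channel_absorbB _ (channel_unzip _ _ _) HG).
move: HO; rewrite !margAE /absorbB => HO.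
rewrite !compA discr_asc -(compA (discr _ _) (discr _ _)) discr_nat compA discr_par_channel //.
by rewrite -(compA (discr _ _) (discr _ _)) discr_nat compA discr_unzip -compA HO stpow1_comp.
Qed.

Lemma dilation_absorbA A B k C (Psi : V I (sT A B)) (Om : V I (sT (spow1 (sT A B) k) C)) :
  dilation e (stpow1 Psi k) Om ->
  dilation e (stpow1 (margB e Psi) k) (comp (absorbA C (unzip A B k)) Om).
Proof.
move=> [HOm HO]; split.
  exact: event_comp_channel HOm (channel_absorbA _ (channel_unzip _ _ _)).
move: HO; rewrite !margAE margBE /absorbA /swap_asc => HO.
rewrite !compA discr_asc -(compA (discr _ _) (discr _ _)) discr_nat compA discr_sw.
by rewrite -(compA (discl _ _) (discr _ _)) discr_nat compA discl_unzip -compA HO stpow1_comp.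
Qed.

Lemma good_scheme_tensor A B (Psi : V I (sT A B)) k m1 m2 (epsA epsB : R)
    (EA : V (spow A k.+1) (spow O m1.+1)) (DA : V (spow O m1.+1) (spow A k.+1))
    (EB : V (spow B k.+1) (spow O m2.+1)) (DB : V (spow O m2.+1) (spow B k.+1)) :
  @good_scheme _ T e O A (margA e Psi) k.+1 m1.+1 epsA EA DA ->
  @good_scheme _ T e O B (margB e Psi) k.+1 m2.+1 epsB EB DB ->
  @good_scheme _ T e O (sT A B) Psi k.+1 (m1.+1 + m2.+1) (epsA + epsB)
     (comp (obits_cat m1 m2) (comp (par EA EB) (unzip A B k)))
     (comp (zip A B k) (comp (par DA DB) (obits_split m1 m2))).
Proof.
move=> [hEA [hDA hSA]] [hEB [hDB hSB]].
split; first exact: channel_comp (channel_comp (channel_unzip _ _ _) (channel_par hEA hEB))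
                                 (channel_obits_cat _ _).
split; first exact: channel_comp (channel_comp (channel_obits_split _ _) (channel_par hDA hDB))
                                 (channel_zip _ _ _).
have -> : comp (comp (zip A B k) (comp (par DA DB) (obits_split m1 m2)))
               (comp (obits_cat m1 m2) (comp (par EA EB) (unzip A B k)))
    = comp (zip A B k) (comp (par (comp DA EA) (comp DB EB)) (unzip A B k)).
  by rewrite -!compA (compA (obits_split m1 m2)) obits_catK comp1f (compA (par DA DB)) -par_comp.
rewrite EFinD; apply: le_lt_trans (lteD hSA hSB).
apply: ge_ereal_sup => _ [C [s [[Om [HOm Href]] ->]]].
apply: le_trans.
  by apply: lee_sum => x _; exact: opnorm_conj_par_le (unzipK A B k) (channel_zip A B k).
rewrite big_split /=; apply: leeD; apply: ereal_sup_ubound.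
  exists (sT (spow1 B k) C), (map (comp (absorbB C (unzip A B k) (comp DB EB))) s).
  split; last by rewrite big_map.
  exists (comp (absorbB C (unzip A B k) (comp DB EB)) Om); split.
    exact: dilation_absorbB (channel_comp hEB hDB) HOm.
  exact: refinement_channel (channel_absorbB _ (channel_unzip _ _ _) (channel_comp hEB hDB)) Href.
exists (sT (spow1 A k) C), (map (comp (absorbA C (unzip A B k))) s).
split; last by rewrite big_map.
exists (comp (absorbA C (unzip A B k)) Om); split; first exact: dilation_absorbA.
exact: refinement_channel (channel_absorbA _ (channel_unzip _ _ _)) Href.
Qed.

End Discarding.

Section ExtendedRealBounds.
Context {R : realType}.
Local Open Scope ereal_scope.

Lemma ereal_inf_le_add (S1 S2 S : set (\bar R)) :
  (forall a, S1 a -> 0 <= a) -> (forall b, S2 b -> 0 <= b) ->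
  (forall a b, S1 a -> S2 b -> ereal_inf S <= a + b) ->
  ereal_inf S <= ereal_inf S1 + ereal_inf S2.
Proof.
move=> H1 H2 H.
have i1 : 0 <= ereal_inf S1 by apply: le_ereal_inf_tmp => ? /H1.
have i2 : 0 <= ereal_inf S2 by apply: le_ereal_inf_tmp => ? /H2.
case E1 : (ereal_inf S1) i1 => [x| |] i1 //; last first.
  by rewrite addye ?leey // gt_eqF // (lt_le_trans _ i2) ?ltNy0.
case E2 : (ereal_inf S2) i2 => [y| |] i2 //; last by rewrite addey ?leey.
apply/lee_addgt0Pr => eps heps.
have heps2 : (0 < eps / 2)%R by rewrite divr_gt0.
have [a Sa ha] : exists2 a, S1 a & a < ereal_inf S1 + (eps / 2)%:E.
  by apply: lb_ereal_inf_adherent; rewrite ?E1.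
have [b Sb hb] : exists2 b, S2 b & b < ereal_inf S2 + (eps / 2)%:E.
  by apply: lb_ereal_inf_adherent; rewrite ?E2.
rewrite E1 in ha; rewrite E2 in hb.
apply: le_trans (H _ _ Sa Sb) (le_trans (leeD (ltW ha) (ltW hb)) _).
by rewrite -!EFinD lee_fin; lra.
Qed.

Lemma le_limn_esup (u v : (\bar R)^nat) :
  (forall m, u m <= v m) -> limn_esup u <= limn_esup v.
Proof.
move=> H; rewrite !limn_esup_lim.
apply: lee_lim; [exact: is_cvg_esups|exact: is_cvg_esups|].
apply: nearW => n; apply: ge_ereal_sup => _ [m /= hm <-].
by apply: le_trans (H m) _; apply: ereal_sup_ubound; exists m.
Qed.

Lemma limn_esup_ge0 (u : (\bar R)^nat) : (forall m, 0 <= u m) -> 0 <= limn (esups u).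
Proof.
move=> Hu; apply: lime_ge; first exact: is_cvg_esups.
by apply: nearW => n; apply: le_trans (Hu n) _; apply: ereal_sup_ubound; exists n => /=.
Qed.

Lemma limn_esup_le_add (u v w : (\bar R)^nat) :
  (forall m, (0 < m)%N -> u m <= v m + w m) -> (forall m, 0 <= v m) -> (forall m, 0 <= w m) ->
  limn_esup u <= limn_esup v + limn_esup w.
Proof.
move=> H Hv Hw; rewrite !limn_esup_lim.
rewrite -limeD; [|exact: is_cvg_esups|exact: is_cvg_esups|].
  2: exact: ge0_adde_def (limn_esup_ge0 Hv) (limn_esup_ge0 Hw).
apply: lee_lim; [exact: is_cvg_esups|apply: is_cvgeD; try exact: is_cvg_esups|].
  exact: ge0_adde_def (limn_esup_ge0 Hv) (limn_esup_ge0 Hw).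
near=> n; apply: ge_ereal_sup => _ [m /= hm <-].
apply: le_trans (H m _) _; first by apply: leq_trans hm; near: n; exists 1%N.
by apply: leeD; apply: ereal_sup_ubound; exists m.
Unshelve. all: by end_near. Qed.

End ExtendedRealBounds.

Section Rates.
Context {R : realType} (T : OPT R).
Variable e : forall A : sys T, V T A (sI T).
Hypothesis He : is_det_effect e.
Variable O : sys T.
Local Open Scope ereal_scope.

Lemma rate_ge0 A (rho : V T (sI T) A) N (eps : R) : 0 <= rate e O rho N eps.
Proof. by apply: le_ereal_inf_tmp => _ [M _ <-]; rewrite lee_fin divr_ge0. Qed.

Lemma rate_le A (rho : V T (sI T) A) N (eps eps' : R) : (eps <= eps')%R ->
  rate e O rho N eps' <= rate e O rho N eps.
Proof.
move=> h; apply: ereal_inf_le_tmp => _ [M [hM [E [D [h1 [h2 h3]]]]] <-].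
exists M => //; split => //; exists E, D; split => //; split => //.
by apply: lt_le_trans h3 _; rewrite lee_fin.
Qed.

Lemma rate_tensor_le A B (Psi : V T (sI T) (sT T A B)) k (epsA epsB : R) :
  rate e O Psi k.+1 (epsA + epsB) <=
  rate e O (margA e Psi) k.+1 epsA + rate e O (margB e Psi) k.+1 epsB.
Proof.
apply: ereal_inf_le_add; [by move=> _ [M _ <-]; rewrite lee_fin divr_ge0 ..|].
move=> _ _ [[|m1] [//= _ [EA [DA hA]]] <-] [[|m2] [//= _ [EB [DB hB]]] <-].
apply: ereal_inf_lbound; exists (m1.+1 + m2.+1)%N; last by rewrite natrD mulrDl EFinD.
split => //; exists (comp (obits_cat O m1 m2) (comp (par EA EB) (unzip A B k))).
by exists (comp (zip A B k) (comp (par DA DB) (obits_split O m1 m2))); exact: good_scheme_tensor.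
Qed.

Lemma limn_esup_rate_tensor_le A B (Psi : V T (sI T) (sT T A B)) (epsA epsB : R) :
  limn_esup (fun N => rate e O Psi N (epsA + epsB)) <=
  limn_esup (fun N => rate e O (margA e Psi) N epsA) +
  limn_esup (fun N => rate e O (margB e Psi) N epsB).
Proof.
by apply: limn_esup_le_add => [[|k] // _|m|m]; [exact: rate_tensor_le|exact: rate_ge0..].
Qed.

(* eps |-> limsup_N R_{N,eps} is nonincreasing, so its right limit at 0 is its supremum. *)
Lemma infoE A (rho : V T (sI T) A) : info e O rho =
  ereal_sup ((fun eps => limn_esup (fun N => rate e O rho N eps)) @`
     [set` Interval (BRight (0%R : R)) (BInfty R false)]).
Proof.
apply: cvg_lim => //; apply: nonincreasing_at_right_cvge => // x y hx hy hxy.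
by apply: le_limn_esup => n; exact: rate_le.
Qed.

End Rates.

Local Open Scope ereal_scope.

Theorem mainTheorem2 (R : realType) (T : OPT R)
  (e : forall A : sys T, V T A (sI T)) (O : sys T)
  (Hsc : strongly_causal T) (He : is_det_effect e)
  (Hdig : digitalizable O)
  (A B : sys T) (Psi : V T (sI T) (sT T A B)) (HPsi : nstate Psi) :
  info e O Psi <= info e O (margA e Psi) + info e O (margB e Psi).
Proof.
rewrite !infoE; apply: ge_ereal_sup => _ [eps /= heps <-].
move: heps; rewrite in_itv /= andbT => heps.
rewrite (splitr eps); apply: le_trans (limn_esup_rate_tensor_le He O Psi _ _) _.
have heps2 : (0 < eps / 2)%R by rewrite divr_gt0.
by apply: leeD; apply: ereal_sup_ubound; exists (eps / 2)%R => //=; rewrite in_itv /= andbT.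
Qed.
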